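(* Any PUT operation $O$ by client $c$ writing key $k$ of partition $p$ at time $t$ with dependency timestamp $dt = dt_r$ satisfies per-key write-follows-reads consistency: for every server $s$ and every time $t'$ such that $CommittedWrites(s,k,t')$ includes $O$, no client accessing $s$ (at or after $t'$) reads a value of $k$ written by a write $w\neq O$ with $w\in ClientReads(c,k,t)$.
   Context: System model. Data is replicated in $D$ datacenters and split into $P$ partitions. In each datacenter $d$, each partition is replicated by a Raft group with a leader $L_d$; Raft guarantees that all members of a group commit the same totally ordered sequence of log entries, each with a log index, in increasing index order. Every version $v$ of a key carries a value, an originating datacenter $v.dc\_id$, the log index $idx(v)$ it received in the Raft log of its originating datacenter, and a hybrid logical clock (HLC) timestamp $v.t=\langle l,c\rangle$; HLC timestamps are compared lexicographically. Writes committed in the group of datacenter $d$ that originated at $d$ are forwarded, in commit order, over FIFO channels to the leaders of the same partition in every other datacenter, which append them (carrying their original index $idx(v)$) to their own Raft logs. Each server $s$ keeps a vector $sv$ of length $D$, initially zero; when $s$ commits a version $v$ it sets $sv[v.dc\_id]:=idx(v)$ and adds $v$ to the version chain of its key. Client protocol. Each client $c$ keeps $D\times P$ matrices $hrm$ (highest read) and $hwm$ (highest write), initially zero, and HLC timestamps $dt_r,dt_w$, initially zero. GET of key $k$ in partition $p$: the client sends vectors $hrv,hwv$ of length $D$ (each either the zero vector or $hrm[:,p]$, resp. $hwm[:,p]$); the server blocks while there is $i$ with $sv[i]<hrv[i]$ or $sv[i]<hwv[i]$; it then returns the version $v$ of $k$ in its version chain with the largest timestamp, together with $v.dc\_id$,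 $sv[v.dc\_id]$ and $v.t$; the client sets $hrm[v.dc\_id,p]:=\max(hrm[v.dc\_id,p],sv[v.dc\_id])$ and $dt_r:=\max(dt_r,v.t)$. PUT of key $k$ in partition $p$ at leader $L_d$: the client sends a dependency timestamp $dt$ (one of $0$, $dt_r$, $dt_w$, $\max(dt_r,dt_w)$); the leader updates its HLC $\langle l,c\rangle$ with $dt$ by the rule: $l':=l$; $l:=\max(l',pt,dt.l)$ where $pt$ is its physical clock; then $c:=\max(c,dt.c)+1$ if $l=l'=dt.l$, else $c:=c+1$ if $l=l'$, else $c:=dt.c+1$ if $l=dt.l$, else $c:=0$; it timestamps the new version with the updated HLC value $t$ and $dc\_id=d$, appends it to the Raft log, and after commit replies with $d$, $sv[d]$ and $t$; the client sets $hwm[d,p]:=\max(hwm[d,p],sv[d])$ and $dt_w:=\max(dt_w,t)$. Definitions. $CommittedWrites(s,k,t)$ is the ordered sequence of all writes of key $k$ committed at server $s$ by time $t$; $ClientWrites(c,k,t)$ is the ordered sequence of all writes of $k$ done by client $c$ by time $t$; $ClientReads(c,k,t)$ is the set of writes whose value of $k$ has been read by client $c$ by time $t$. *)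

(* Operational model of the geo-replicated key-value store
   (Raft groups per datacenter/partition, HLC timestamps, client sessions). *)
From mathcomp Require Import all_boot.

Set Implicit Arguments.
Unset Strict Implicit.
Unset Printing Implicit Defensive.

Definition hlc := (nat * nat)%type.
Definition hlc0 : hlc := (0, 0).
Definition hlc_lt (a b : hlc) : bool := (a.1 < b.1) || ((a.1 == b.1) && (a.2 < b.2)).
Definition hlc_le (a b : hlc) : bool := (a == b) || hlc_lt a b.
Definition hlc_max (a b : hlc) : hlc := if hlc_lt a b then b else a.

(* HLC update of a leader whose clock is [cur], physical clock [pt],
   with dependency timestamp [dt] (the rule of the paper). *)
Definition hlc_update (cur : hlc) (pt : nat) (dt : hlc) : hlc :=
  let l' := cur.1 in
  let l := maxn (maxn l' pt) dt.1 in
  let c := if (l == l') && (l' == dt.1) then (maxn cur.2 dt.2).+1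
           else if l == l' then cur.2.+1
           else if l == dt.1 then dt.2.+1
           else 0 in
  (l, c).

(* which dependency timestamp a PUT sends *)
Inductive dtsel := DT0 | DTr | DTw | DTmax.

Section Model.
(* D datacenters, P partitions, each Raft group has R.+1 members, member ord0
   being the leader; keys are mapped to partitions by [part]. *)
Variables (D P R : nat) (Key : eqType) (part : Key -> 'I_P) (Val : eqType)
          (Client : eqType).

(* a version (= a write): key, value, originating datacenter, its log index in
   the Raft log of its originating datacenter, HLC timestamp *)
Definition version := (Key * Val * 'I_D * nat * hlc)%type.
Definition v_key (v : version) : Key := v.1.1.1.1.
Definition v_val (v : version) : Val := v.1.1.1.2.
Definition v_dc  (v : version) : 'I_D := v.1.1.2.
Definition v_idx (v : version) : nat := v.1.2.
Definition v_ts  (v : version) : hlc := v.2.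

(* a server: datacenter, partition, member of the Raft group *)
Definition server := ('I_D * 'I_P * 'I_R.+1)%type.
Definition leader (d : 'I_D) (p : 'I_P) : server := (d, p, ord0).

Record cstate := CState {
  hrm : 'I_D -> 'I_P -> nat;
  hwm : 'I_D -> 'I_P -> nat;
  dt_r : hlc;
  dt_w : hlc;
  pending : option version  (* PUT issued and not yet replied *)
}.

Record state := State {
  glog : 'I_D -> 'I_P -> seq version;        (* Raft log of group (d,p) *)
  ncommit : 'I_D -> 'I_P -> 'I_R.+1 -> nat;  (* committed prefix length per member *)
  nfwd : 'I_D -> 'I_D -> 'I_P -> nat;        (* # d-originated writes forwarded d -> d' *)
  hlcs : 'I_D -> 'I_P -> hlc;                (* HLC of leader of (d,p) *)
  cst : Client -> cstate
}.

Definition init_cstate : cstate :=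
  CState (fun _ _ => 0) (fun _ _ => 0) hlc0 hlc0 None.
Definition init_state : state :=
  State (fun _ _ => [::]) (fun _ _ _ => 0) (fun _ _ _ => 0) (fun _ _ => hlc0)
        (fun _ => init_cstate).

(* the committed log entries of server s (same totally ordered sequence for all
   members of a group: a prefix of the group log) *)
Definition committed (st : state) (s : server) : seq version :=
  take (ncommit st s.1.1 s.1.2 s.2) (glog st s.1.1 s.1.2).

(* sv[i]: set to idx(v) when committing a version v with v.dc_id = i *)
Definition sv (st : state) (s : server) (i : 'I_D) : nat :=
  foldl (fun acc v => if v_dc v == i then v_idx v else acc) 0 (committed st s).

Definition chain (st : state) (s : server) (k : Key) : seq version :=
  [seq v <- committed st s | v_key v == k].

Definition orig_committed (st : state) (d : 'I_D) (p : 'I_P) : seq version :=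
  [seq v <- committed st (leader d p) | v_dc v == d].

Definition upd {A : eqType} {B : Type} (f : A -> B) (a : A) (b : B) : A -> B :=
  fun x => if x == a then b else f x.
Definition upd2 {A1 A2 : eqType} {B : Type} (f : A1 -> A2 -> B) (a1 : A1) (a2 : A2)
  (b : B) : A1 -> A2 -> B :=
  fun x y => if (x == a1) && (y == a2) then b else f x y.

Definition sel_dt (cs : cstate) (sel : dtsel) : hlc :=
  match sel with
  | DT0 => hlc0 | DTr => dt_r cs | DTw => dt_w cs | DTmax => hlc_max (dt_r cs) (dt_w cs)
  end.

Inductive label :=
| Stutter
| LCommit (s : server)
| LForward (d d' : 'I_D) (p : 'I_P)
| LPut (c : Client) (v : version) (sel : dtsel)
| LPutReply (c : Client) (v : version)
| LGet (c : Client) (k : Key) (s : server) (res : option version).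

Inductive step : state -> label -> state -> Prop :=
| StepStutter st : step st Stutter st
| StepCommit st (d : 'I_D) (p : 'I_P) (r : 'I_R.+1) :
    ncommit st d p r < size (glog st d p) ->
    step st (LCommit (d, p, r))
      (State (glog st)
             (fun d1 p1 r1 => if [&& d1 == d, p1 == p & r1 == r]
                              then (ncommit st d p r).+1 else ncommit st d1 p1 r1)
             (nfwd st) (hlcs st) (cst st))
| StepForward st (d d' : 'I_D) (p : 'I_P) (v : version) :
    d != d' ->
    nfwd st d d' p < size (orig_committed st d p) ->
    v = nth v (orig_committed st d p) (nfwd st d d' p) ->
    step st (LForward d d' p)
      (State (upd2 (glog st) d' p (rcons (glog st d' p) v))
             (ncommit st)
             (fun a b q => if [&& a == d, b == d' & q == p]
                           then (nfwd st d d' p).+1 else nfwd st a b q)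
             (hlcs st) (cst st))
| StepPut st (c : Client) (k : Key) (x : Val) (d : 'I_D) (sel : dtsel) (pt : nat) :
    pending (cst st c) = None ->
    let p := part k in
    let t := hlc_update (hlcs st d p) pt (sel_dt (cst st c) sel) in
    let v : version := (k, x, d, (size (glog st d p)).+1, t) in
    let cs := cst st c in
    step st (LPut c v sel)
      (State (upd2 (glog st) d p (rcons (glog st d p) v))
             (ncommit st) (nfwd st)
             (upd2 (hlcs st) d p t)
             (upd (cst st) c (CState (hrm cs) (hwm cs) (dt_r cs) (dt_w cs) (Some v))))
| StepPutReply st (c : Client) (v : version) :
    pending (cst st c) = Some v ->
    let d := v_dc v in
    let p := part (v_key v) in
    v \in committed st (leader d p) ->
    let cs := cst st c in
    step st (LPutReply c v)
      (State (glog st) (ncommit st) (nfwd st) (hlcs st)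
         (upd (cst st) c
            (CState (hrm cs)
                    (upd2 (hwm cs) d p (maxn (hwm cs d p) (sv st (leader d p) d)))
                    (dt_r cs) (hlc_max (dt_w cs) (v_ts v)) None)))
| StepGet st (c : Client) (k : Key) (d : 'I_D) (r : 'I_R.+1) (br bw : bool)
          (res : option version) :
    pending (cst st c) = None ->
    let p := part k in
    let s : server := (d, p, r) in
    let cs := cst st c in
    let hrv := fun i => if br then hrm cs i p else 0 in
    let hwv := fun i => if bw then hwm cs i p else 0 in
    (* the server no longer blocks *)
    (forall i, (hrv i <= sv st s i) && (hwv i <= sv st s i)) ->
    match res with
    | Some v => (v \in chain st s k) /\ (forall u, u \in chain st s k -> ~~ hlc_lt (v_ts v) (v_ts u))
    | None => chain st s k = [::]
    end ->
    step st (LGet c k s res)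
      (State (glog st) (ncommit st) (nfwd st) (hlcs st)
         (match res with
          | None => cst st
          | Some v =>
              upd (cst st) c
                (CState (upd2 (hrm cs) (v_dc v) p (maxn (hrm cs (v_dc v) p) (sv st s (v_dc v))))
                        (hwm cs) (hlc_max (dt_r cs) (v_ts v)) (dt_w cs) None)
          end)).

Definition execution (ex : nat -> state) (lb : nat -> label) : Prop :=
  ex 0 = init_state /\ forall n, step (ex n) (lb n) (ex n.+1).

Definition CommittedWrites (ex : nat -> state) (s : server) (k : Key) (t : nat)
  : seq version := chain (ex t) s k.

Definition ClientWrites (lb : nat -> label) (c : Client) (k : Key) (t : nat)
  : seq version :=
  pmap (fun n => match lb n with
                 | LPut c' v _ => if (c' == c) && (v_key v == k) then Some v else None
                 | _ => None end) (iota 0 t).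

Definition ClientReads (lb : nat -> label) (c : Client) (k : Key) (t : nat)
  (w : version) : Prop :=
  exists n s, n < t /\ lb n = LGet c k s (Some w).

End Model.

Arguments Stutter {D P R Key Val Client}.
Arguments LCommit {D P R Key Val Client} s.
Arguments LForward {D P R Key Val Client} d d' p.
Arguments LPut {D P R Key Val Client} c v sel.
Arguments LPutReply {D P R Key Val Client} c v.
Arguments LGet {D P R Key Val Client} c k s res.

(* A GET raises the reader's dt_r to at least the timestamp of the version it
   returns, and dt_r never decreases; a PUT sent with dt = dt_r is timestamped
   strictly above dt_r by the HLC update rule.  Hence every version w that c
   read before issuing O has a timestamp strictly below that of O.  Committed
   entries are never lost, so once O is in the chain of k at s it stays there,
   and a GET at s, which returns a version of maximal timestamp, cannot
   return w. *)
From mathcomp Require Import all_boot zify.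

Set Implicit Arguments.
Unset Strict Implicit.
Unset Printing Implicit Defensive.

Lemma hlc_le_refl a : hlc_le a a.
Proof. by rewrite /hlc_le eqxx. Qed.

Lemma hlc_le_trans a b c : hlc_le a b -> hlc_le b c -> hlc_le a c.
Proof.
case: a b c => [a1 a2] [b1 b2] [c1 c2].
rewrite /hlc_le /hlc_lt /= !xpair_eqE; lia.
Qed.

Lemma hlc_le_lt_trans a b c : hlc_le a b -> hlc_lt b c -> hlc_lt a c.
Proof.
case: a b c => [a1 a2] [b1 b2] [c1 c2].
rewrite /hlc_le /hlc_lt /= !xpair_eqE; lia.
Qed.

Lemma hlc_le_maxl a b : hlc_le a (hlc_max a b).
Proof. by rewrite /hlc_max /hlc_le; case: ifP => lt_ab; rewrite ?lt_ab ?orbT ?eqxx. Qed.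

Lemma hlc_le_maxr a b : hlc_le b (hlc_max a b).
Proof.
case: a b => [a1 a2] [b1 b2]; rewrite /hlc_max /hlc_le /hlc_lt /=.
case: ifP => /=; rewrite !xpair_eqE /=; lia.
Qed.

Lemma hlc_lt_update cur pt dt : hlc_lt dt (hlc_update cur pt dt).
Proof.
case: cur dt => [c1 c2] [d1 d2]; rewrite /hlc_update /hlc_lt /=.
by case: ifP => /=; [|case: ifP => /=; [|case: ifP => /=]]; lia.
Qed.

Lemma subset_take_cat (T : eqType) m m' (s s' : seq T) :
  m <= m' -> {subset take m s <= take m' (s ++ s')}.
Proof.
move=> le_mm' x xs.
have xs' : x \in take m' s by rewrite -(subnKC le_mm') takeD mem_cat xs.
by rewrite take_cat; case: ifP => // _; rewrite mem_cat (mem_take xs').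
Qed.

Lemma subset_take_rcons (T : eqType) m (s : seq T) x :
  {subset take m s <= take m (rcons s x)}.
Proof. by rewrite -cats1; apply: subset_take_cat. Qed.

Lemma execution_monotone (S X : Type) (ex : nat -> S) (f : S -> X)
    (r : X -> X -> Prop) :
  (forall x, r x x) -> (forall x y z, r x y -> r y z -> r x z) ->
  (forall n, r (f (ex n)) (f (ex n.+1))) ->
  forall a b, a <= b -> r (f (ex a)) (f (ex b)).
Proof.
move=> r_refl r_trans r_step a b /subnK <-.
elim: (b - a) => [|j IH] //; exact: r_trans IH (r_step _).
Qed.

Section Steps.
Variables (D P R : nat) (Key : eqType) (part : Key -> 'I_P) (Val : eqType)
          (Client : eqType).
Notation state := (state D P R Key Val Client).

Lemma committed_step_subset (st st' : state) l s :
  step part st l st' -> {subset committed st s <= committed st' s}.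
Proof.
rewrite /committed; case=> /= {}st; try by move=> *.
- move=> d p r _ x; case: ifP => [/and3P[/eqP-> /eqP-> /eqP->] xs|_] //.
  by have := subset_take_cat [::] (leqnSn _) xs; rewrite cats0.
- move=> d d' p v _ _ _ x; rewrite /upd2.
  by case: ifP => [/andP[/eqP-> /eqP->]|_] //; apply: subset_take_rcons.
- move=> c k x d sel pt _ y; rewrite /upd2.
  by case: ifP => [/andP[/eqP-> /eqP->]|_] //; apply: subset_take_rcons.
Qed.

Lemma chain_step_subset (st st' : state) l s k :
  step part st l st' -> {subset chain st s k <= chain st' s k}.
Proof.
move=> stp v; rewrite !mem_filter => /andP[-> vs].
exact: committed_step_subset stp _ vs.
Qed.

Lemma dt_r_step_le (st st' : state) l c :
  step part st l st' -> hlc_le (dt_r (cst st c)) (dt_r (cst st' c)).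
Proof.
case=> /= {}st; try by move=> *; exact: hlc_le_refl.
- by move=> c0 *; rewrite /upd; case: ifP => [/eqP->|_]; exact: hlc_le_refl.
- by move=> c0 *; rewrite /upd; case: ifP => [/eqP->|_]; exact: hlc_le_refl.
- move=> c0 k d r br bw [v|] _ _ _ /=; last exact: hlc_le_refl.
  by rewrite /upd; case: ifP => [/eqP->|_] /=; [exact: hlc_le_maxl | exact: hlc_le_refl].
Qed.

Lemma get_raises_dt_r (st st' : state) c k s w :
  step part st (LGet c k s (Some w)) st' -> hlc_le (v_ts w) (dt_r (cst st' c)).
Proof. by move=> stp; inversion stp; subst; rewrite /= /upd eqxx; exact: hlc_le_maxr. Qed.

Lemma get_returns_chain_max (st st' : state) c k s w :
  step part st (LGet c k s (Some w)) st' ->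
  forall u, u \in chain st s k -> ~~ hlc_lt (v_ts w) (v_ts u).
Proof. by move=> stp; inversion stp; subst; intuition. Qed.

Lemma put_dt_r_lt (st st' : state) c v :
  step part st (LPut c v DTr) st' -> hlc_lt (dt_r (cst st c)) (v_ts v).
Proof. by move=> stp; inversion stp; subst; exact: hlc_lt_update. Qed.

End Steps.

Theorem mainTheorem5 (D P R : nat) (Key : eqType) (part : Key -> 'I_P)
  (Val : eqType) (Client : eqType)
  (ex : nat -> state D P R Key Val Client)
  (lb : nat -> label D P R Key Val Client) :
  execution part ex lb ->
  forall (t : nat) (c : Client) (O : version D Key Val) (k : Key),
    v_key O = k ->
    lb t = LPut c O DTr ->
  forall (s : server D P R) (t' : nat),
    O \in CommittedWrites ex s k t' ->
  forall (n : nat) (c' : Client) (w : version D Key Val),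
    t' <= n ->
    lb n = LGet c' k s (Some w) ->
    w != O ->
    ~ ClientReads lb c k t w.
Proof.
move=> [_ steps] t c O k _ put_t s t' O_t' n c' w le_t'n get_n _ [m [s0 [lt_mt get_m]]].
have w_le_dtr : hlc_le (v_ts w) (dt_r (cst (ex m.+1) c)).
  by have := steps m; rewrite get_m => /get_raises_dt_r.
have dtr_lt_O : hlc_lt (dt_r (cst (ex t) c)) (v_ts O).
  by have := steps t; rewrite put_t => /put_dt_r_lt.
have dtr_mono := execution_monotone (f := fun st => dt_r (cst st c))
  (r := hlc_le) hlc_le_refl (@hlc_le_trans) (fun i => dt_r_step_le c (steps i)).
have O_n : O \in chain (ex n) s k.
  apply: (execution_monotone (f := fun st => chain st s k)
            (r := fun x y => {subset x <= y}) _ _ _ le_t'n) O_t'.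
  - by move=> x.
  - by move=> x y z xy yz v /xy /yz.
  - by move=> i; apply: chain_step_subset (steps i).
have := steps n; rewrite get_n => /get_returns_chain_max /(_ _ O_n).
by rewrite (hlc_le_lt_trans (hlc_le_trans w_le_dtr (dtr_mono _ _ lt_mt)) dtr_lt_O).
Qed.
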